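(* Let $a,b\in\mathbb{Z}$, $a\ne0$, $\mathcal{G}(x)=x^8+ax^6+bx^4+ax^2+1$, and $W_1=b+2-2a$, $W_2=b+2+2a$, $W_3=a^2-4b+8$. (1) If there is a prime $q$ with $q^2\mid W_1$ or $q^2\mid W_2$, then $\mathcal{G}(x)$ is not monogenic. (2) If $W_1$ and $W_2$ are squarefree and there is a prime $q\ge 3$ with $q^2\mid W_3$, then $\mathcal{G}(x)$ is not monogenic. (3) If $W_1,W_2$ are squarefree, $W_3$ is not divisible by the square of any odd prime, and $(a\bmod 4,\ b\bmod 4)\in\{(0,1),(2,3)\}$, then $\mathcal{G}(x)$ is not monogenic.
   Context: A monic polynomial $f(x)\in\mathbb{Z}[x]$ is monogenic if it is irreducible over $\mathbb{Q}$ and $\mathbb{Z}[\theta]$ is the full ring of integers of $\mathbb{Q}(\theta)$, where $f(\theta)=0$. *)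

From HB Require Import structures.
From mathcomp Require Import all_boot all_order all_algebra all_field.
Set Implicit Arguments. Unset Strict Implicit. Unset Printing Implicit Defensive.
Import Order.TTheory GRing.Theory Num.Theory.
Local Open Scope ring_scope.

(* Q(theta) as a subset of algC: values of rational polynomials at theta. *)
Definition in_Qadj (theta x : algC) : Prop :=
  exists p : {poly rat}, x = (map_poly ratr p).[theta].

(* Z[theta] as a subset of algC: values of integer polynomials at theta. *)
Definition in_Zadj (theta x : algC) : Prop :=
  exists p : {poly int}, x = (map_poly intr p).[theta].

Definition in_ring_of_integers (theta x : algC) : Prop :=
  in_Qadj theta x /\ x \in Aint.

Definition monogenic (f : {poly int}) : Prop :=
  f \is monic /\
  irreducible_poly (map_poly intr f : {poly rat}) /\
  exists theta : algC, root (map_poly intr f) theta /\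
    (forall x, in_ring_of_integers theta x <-> in_Zadj theta x).

Definition squarefree_int (z : int) : Prop :=
  forall q : nat, prime q -> ~~ (((q ^ 2)%N)%:Z %| z)%Z.

Definition Gpoly (a b : int) : {poly int} :=
  'X^8 + a%:P * 'X^6 + b%:P * 'X^4 + a%:P * 'X^2 + 1.

From HB Require Import structures.
From mathcomp Require Import all_boot all_order all_algebra all_field.
From mathcomp Require Import ring.
Import Order.TTheory GRing.Theory Num.Theory.
Local Open Scope ring_scope.

(* In every case we exhibit eta = h(theta) / n with h in Z[x] of degree < 8
   having a coefficient not divisible by n.  Since G is irreducible, an element
   of Z[theta] has a unique integer representative of degree < 8, so eta is not
   in Z[theta]; yet eta is an algebraic integer, because reducing modulo
   G(theta) = 0 shows that eta^2 (or, when a = 0 and b = 1 mod 4,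
   g (g - 1) for g = eta / theta^2) is an algebraic integer. *)

Lemma Aint_of_horner_monic (p : {poly algC}) (x : algC) :
  p \is monic -> (1 < size p)%N -> p \is a polyOver Num.int ->
  p.[x] \in Aint -> x \in Aint.
Proof.
move=> p_monic p_gt1 p_int px_Aint.
apply: (@root_monic_Aint (minCpoly p.[x] \Po p)).
- by rewrite /root horner_comp; apply: root_minCpoly.
- rewrite monicE lead_coef_comp // (monicP p_monic) expr1n mulr1.
  by rewrite -monicE minCpoly_monic.
- exact: polyOver_comp.
Qed.

Lemma Aint_of_sqr (x : algC) : x ^+ 2 \in Aint -> x \in Aint.
Proof.
move=> x2_Aint.
apply: (@Aint_of_horner_monic 'X^2); rewrite ?monicXn ?size_polyXn ?polyOverXn //.
by rewrite hornerXn.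
Qed.

Lemma Aint_of_mul_subr1 (x : algC) : x * (x - 1) \in Aint -> x \in Aint.
Proof.
have p_int : ('X * ('X - 1%:P) : {poly algC}) \is a polyOver Num.int.
  apply/polyOverP => j; rewrite coefXM coefB coefX coefC.
  by case: j => [|[|[|j]]]; rewrite /= ?subr0 ?sub0r ?subrr ?rpredN ?rpred1 ?rpred0.
move=> x_Aint; apply: (@Aint_of_horner_monic _ x _ _ p_int).
- by rewrite monicMl ?monicX ?monicXsubC.
- by rewrite size_monicM ?monicX ?size_polyX ?size_XsubC ?polyXsubC_eq0.
- by rewrite hornerM hornerX hornerXsubC.
Qed.

Lemma Aint_div_of_sqr (x u d : algC) :
  d != 0 -> x ^+ 2 = u * d ^+ 2 -> u \in Aint -> x / d \in Aint.
Proof.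
by move=> d_neq0 x2E u_Aint; apply: Aint_of_sqr; rewrite expr_div_n x2E mulfK ?expf_neq0.
Qed.

Lemma Aint_root_monic_int (G : {poly int}) (t : algC) :
  G \is monic -> root (map_poly intr G) t -> t \in Aint.
Proof.
move=> G_monic Gt; apply: (root_monic_Aint Gt); first exact: monic_map.
by apply/polyOverP => j; rewrite coef_map intr_int.
Qed.

Lemma root_irreducible_int_eq0 (G r : {poly int}) (t : algC) :
  irreducible_poly (map_poly intr G : {poly rat}) -> (size r < size G)%N ->
  root (map_poly intr G) t -> root (map_poly intr r) t -> r = 0.
Proof.
set toQ := map_poly (intr : int -> rat).
have toC p : map_poly intr p = map_poly ratr (toQ p) :> {poly algC}.
  by rewrite -map_poly_comp; apply: eq_map_poly => z /=; rewrite rmorph_int.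
have size_toQ p : size (toQ p) = size p by apply: size_map_inj_poly; [exact: intr_inj|].
move=> G_irr r_small; rewrite !toC => Gt rt.
apply/eqP; rewrite -size_poly_eq0 -size_toQ size_poly_eq0.
apply: contraTT rt => r_neq0.
have : coprimep (toQ G) (toQ r).
  rewrite irreducible_poly_coprime //; apply/negP => /(dvdp_leq r_neq0).
  by rewrite !size_toQ leqNgt r_small.
by rewrite -(coprimep_map (ratr : {rmorphism rat -> algC})) => /coprimep_root; apply.
Qed.

Lemma not_monogenic_of_Aint_fraction (G h : {poly int}) (n i : nat) :
  (size h < size G)%N -> (1 < n)%N -> ~~ (n%:Z %| h`_i)%Z ->
  (forall t : algC, root (map_poly intr G) t -> t \in Aint ->
     (map_poly intr h).[t] / n%:R \in Aint) ->
  ~ monogenic G.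
Proof.
move=> h_small n_gt1 n_ndvd eta_Aint [G_monic [G_irr [t [Gt ZadjE]]]].
have n_neq0 : (n%:R : algC) != 0 by rewrite pnatr_eq0 -lt0n ltnW.
set eta := (map_poly intr h).[t] / n%:R.
have eta_Q : in_Qadj t eta.
  exists (n%:R^-1 *: map_poly intr h).
  rewrite map_polyZ hornerZ fmorphV rmorph_nat -map_poly_comp mulrC.
  by congr (_.[t] / _); apply: eq_map_poly => z /=; rewrite rmorph_int.
have t_Aint := Aint_root_monic_int _ _ G_monic Gt.
have [p etaE] := (ZadjE eta).1 (conj eta_Q (eta_Aint t Gt t_Aint)).
set p1 := Pdiv.CommonRing.rmodp p G.
have p1_small : (size p1 < size G)%N.
  by rewrite Pdiv.CommonRing.ltn_rmodpN0 ?monic_neq0.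
have p1t : (map_poly intr p1).[t] = eta.
  rewrite etaE {1}(Pdiv.RingMonic.rdivp_eq G_monic p) rmorphD rmorphM /= !hornerE.
  by rewrite (rootP Gt) mulr0 add0r.
have : n%:Z *: p1 - h = 0.
  apply: root_irreducible_int_eq0 G_irr _ Gt _.
    by rewrite (leq_ltn_trans (size_polyD _ _)) // size_polyN gtn_max h_small
      (leq_ltn_trans (size_scale_leq _ _)).
  rewrite rmorphB /= map_polyZ /= rootE !hornerE p1t /eta.
  by rewrite mulrC divfK // subrr.
move/(congr1 (fun q : {poly int} => q`_i))/eqP.
rewrite coefB coefZ coef0 subr_eq0 => /eqP hiE.
by move: n_ndvd; rewrite -hiE dvdz_mulr.
Qed.

Lemma not_monogenic_of_sqr_div (G h : {poly int}) (n i : nat) :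
  (size h < size G)%N -> (1 < n)%N -> ~~ (n%:Z %| h`_i)%Z ->
  (forall t : algC, root (map_poly intr G) t -> t \in Aint ->
     exists2 u, u \in Aint & (map_poly intr h).[t] ^+ 2 = u * n%:R ^+ 2) ->
  ~ monogenic G.
Proof.
move=> h_small n_gt1 n_ndvd h_sqr.
apply: (not_monogenic_of_Aint_fraction _ _ _ _ h_small n_gt1 n_ndvd) => t Gt tA.
have [u uA hE] := h_sqr t Gt tA.
by apply: Aint_div_of_sqr _ hE uA; rewrite pnatr_eq0 -lt0n ltnW.
Qed.

Lemma intr_sqr_dvdz (n : nat) (w : int) :
  ((n ^ 2)%N%:Z %| w)%Z -> exists k : int, w%:~R = k%:~R * (n%:R : algC) ^+ 2.
Proof. by move=> /dvdzP [k ->]; exists k; rewrite rmorphM /= -natrX. Qed.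

Lemma Gpoly_Poly (a b : int) : Gpoly a b = Poly [:: 1; 0; a; 0; b; 0; a; 0; 1].
Proof.
apply/polyP=> j; rewrite coef_Poly /Gpoly !coefD !coefCM !coefXn coef1.
by case: j => [|[|[|[|[|[|[|[|[|j]]]]]]]]];
  rewrite /= ?(mulr0, mulr1, addr0, add0r) ?nth_nil.
Qed.

Lemma size_Gpoly (a b : int) : size (Gpoly a b) = 9%N.
Proof. by rewrite Gpoly_Poly (@PolyK _ 0) ?oner_eq0. Qed.

Lemma horner_Gpoly (a b : int) (t : algC) :
  (map_poly intr (Gpoly a b)).[t] =
  t ^+ 8 + a%:~R * t ^+ 6 + b%:~R * t ^+ 4 + a%:~R * t ^+ 2 + 1.
Proof. by rewrite Gpoly_Poly map_Poly horner_Poly /=; ring. Qed.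

Definition W1 (a b : int) : int := b + 2 - 2 * a.
Definition W2 (a b : int) : int := b + 2 + 2 * a.
Definition W3 (a b : int) : int := a ^+ 2 - 4 * b + 8.

Lemma not_monogenic_Gpoly_sqr_dvd_W1 (a b : int) (n : nat) :
  (1 < n)%N -> ((n ^ 2)%N%:Z %| W1 a b)%Z -> ~ monogenic (Gpoly a b).
Proof.
move=> n_gt1 /intr_sqr_dvdz [k]; rewrite /W1 !rmorphD rmorphN rmorphM /= => W1E.
apply: (@not_monogenic_of_sqr_div _ (Poly [:: 0; 1; 0; a - 1; 0; a - 1; 0; 1]) n 1).
- by rewrite size_Gpoly (leq_ltn_trans (size_Poly _)).
- exact: n_gt1.
- by rewrite coef_Poly /= dvdzE /= dvdn1 neq_ltn n_gt1 orbT.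
move=> t; rewrite rootE horner_Gpoly => /eqP Gt tA.
set s := t ^+ 6 + (a%:~R - 2) * t ^+ 4 + t ^+ 2.
exists (- k%:~R * t ^+ 4 * s).
  by rewrite /s !(rpredM, rpredN, rpredD, rpredB, rpredX, Aint_int, rpred_nat).
have bE : b%:~R = k%:~R * n%:R ^+ 2 - 2 + 2 * a%:~R :> algC by rewrite -W1E; ring.
rewrite bE in Gt.
(* h(t)^2 = s * G(t) - W1 * t^4 * s *)
apply/eqP; rewrite -subr_eq0; apply/eqP.
by rewrite map_Poly horner_Poly /= -[RHS](mulr0 s) -[X in _ = s * X]Gt /s; ring.
Qed.

Lemma not_monogenic_Gpoly_sqr_dvd_W2 (a b : int) (n : nat) :
  (1 < n)%N -> ((n ^ 2)%N%:Z %| W2 a b)%Z -> ~ monogenic (Gpoly a b).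
Proof.
move=> n_gt1 /intr_sqr_dvdz [k]; rewrite /W2 !rmorphD rmorphM /= => W2E.
apply: (@not_monogenic_of_sqr_div _ (Poly [:: 0; -1; 0; - (a + 1); 0; a + 1; 0; 1]) n 7).
- by rewrite size_Gpoly (leq_ltn_trans (size_Poly _)).
- exact: n_gt1.
- by rewrite coef_Poly /= dvdzE /= dvdn1 neq_ltn n_gt1 orbT.
move=> t; rewrite rootE horner_Gpoly => /eqP Gt tA.
set s := t ^+ 6 + (a%:~R + 2) * t ^+ 4 + t ^+ 2.
exists (- k%:~R * t ^+ 4 * s).
  by rewrite /s !(rpredM, rpredN, rpredD, rpredB, rpredX, Aint_int, rpred_nat).
have bE : b%:~R = k%:~R * n%:R ^+ 2 - 2 - 2 * a%:~R :> algC by rewrite -W2E; ring.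
rewrite bE in Gt.
(* h(t)^2 = s * G(t) - W2 * t^4 * s *)
apply/eqP; rewrite -subr_eq0; apply/eqP.
by rewrite map_Poly horner_Poly /= -[RHS](mulr0 s) -[X in _ = s * X]Gt /s; ring.
Qed.

Lemma not_monogenic_Gpoly_sqr_dvd_W3 (a b : int) (n : nat) :
  (2 < n)%N -> ((n ^ 2)%N%:Z %| W3 a b)%Z -> ~ monogenic (Gpoly a b).
Proof.
move=> n_gt2 /intr_sqr_dvdz [k]; rewrite /W3 !rmorphD rmorphN !rmorphM /= => W3E.
apply: (@not_monogenic_of_sqr_div _ (Poly [:: 2; 0; a; 0; 2]) n 0).
- by rewrite size_Gpoly (leq_ltn_trans (size_Poly _)).
- exact: ltnW.
- rewrite coef_Poly /= dvdzE /=; apply/negP => /(dvdn_leq (isT : (0 < 2)%N)).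
  by rewrite leqNgt n_gt2.
move=> t; rewrite rootE horner_Gpoly => /eqP Gt tA.
exists (k%:~R * t ^+ 4); first by rewrite rpredM ?rpredX ?Aint_int.
have bE : b%:~R = (a%:~R ^+ 2 + 8 - k%:~R * n%:R ^+ 2) / 4 :> algC.
  by rewrite -W3E; field.
rewrite bE in Gt.
(* h(t)^2 = 4 * G(t) + W3 * t^4 *)
apply/eqP; rewrite -subr_eq0; apply/eqP.
by rewrite map_Poly horner_Poly /= -[RHS](mulr0 4) -[X in _ = 4 * X]Gt; field.
Qed.

Lemma not_monogenic_Gpoly_sqr4_dvd_W3_sub4 (a b : int) :
  ((4 ^ 2)%N%:Z %| W3 a b - 4)%Z -> ~ monogenic (Gpoly a b).
Proof.
move=> /intr_sqr_dvdz [k]; rewrite /W3 !rmorphB !rmorphD rmorphN !rmorphM /= => W3E.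
apply: (@not_monogenic_of_Aint_fraction _ (Poly [:: 2; 0; a + 2; 0; 2]) 4 0) => //.
- by rewrite size_Gpoly (leq_ltn_trans (size_Poly _)).
- by rewrite coef_Poly.
move=> t; rewrite rootE horner_Gpoly => /eqP Gt tA.
have t_neq0 : t != 0.
  apply: contraPneq Gt => ->; rewrite !expr0n /= !mulr0 !add0r.
  by apply/eqP; rewrite oner_eq0.
have bE : b%:~R = (a%:~R ^+ 2 + 4 - k%:~R * 4%:R ^+ 2) / 4 :> algC.
  by rewrite -W3E; field.
rewrite bE in Gt.
set g := (2 * t ^+ 4 + (a%:~R + 2) * t ^+ 2 + 2) / (4 * t ^+ 2).
have -> : (map_poly intr (Poly [:: 2; 0; a + 2; 0; 2])).[t] / 4%:R = t ^+ 2 * g.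
  by rewrite map_Poly horner_Poly /= /g; field.
rewrite rpredM ?rpredX //; apply: Aint_of_mul_subr1.
(* G(t) / t^4 = u^2 + a u + b - 2 with u = t^2 + t^-2 = 2 g - (a + 2) / 2,
   which gives G(t) / t^4 = 4 (g (g - 1) - (W3 - 4) / 16). *)
suff -> : g * (g - 1) = k%:~R by apply: Aint_int.
apply/eqP; rewrite -subr_eq0; apply/eqP.
by rewrite -[RHS](mul0r (4 * t ^+ 4)^-1) -[X in _ = X / _]Gt /g; field.
Qed.

Lemma sqr4_dvd_W3_sub4_of_mod4 (a b : int) :
  (a %% 4)%Z = 0 -> (b %% 4)%Z = 1 -> ((4 ^ 2)%N%:Z %| W3 a b - 4)%Z.
Proof.
move=> a_mod4 b_mod4; rewrite /W3 (divz_eq a 4) (divz_eq b 4) a_mod4 b_mod4.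
by apply/dvdzP; exists ((a %/ 4)%Z ^+ 2 - (b %/ 4)%Z); ring.
Qed.

Lemma sqr4_dvd_W3_of_mod4 (a b : int) :
  (a %% 4)%Z = 2 -> (b %% 4)%Z = 3 -> ((4 ^ 2)%N%:Z %| W3 a b)%Z.
Proof.
move=> a_mod4 b_mod4; rewrite /W3 (divz_eq a 4) (divz_eq b 4) a_mod4 b_mod4.
by apply/dvdzP; exists ((a %/ 4)%Z ^+ 2 + (a %/ 4)%Z - (b %/ 4)%Z); ring.
Qed.

Theorem mainTheorem3 (a b : int) (ha : a != 0) :
  let W1 := b + 2 - 2 * a in
  let W2 := b + 2 + 2 * a in
  let W3 := a ^+ 2 - 4 * b + 8 in
  [/\ (exists q : nat, prime q /\
         ((((q ^ 2)%N)%:Z %| W1)%Z \/ (((q ^ 2)%N)%:Z %| W2)%Z)) ->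
        ~ monogenic (Gpoly a b),
      (squarefree_int W1 -> squarefree_int W2 ->
       (exists q : nat, prime q /\ (3 <= q)%N /\ (((q ^ 2)%N)%:Z %| W3)%Z) ->
        ~ monogenic (Gpoly a b))
    & (squarefree_int W1 -> squarefree_int W2 ->
       (forall q : nat, prime q -> odd q -> ~~ (((q ^ 2)%N)%:Z %| W3)%Z) ->
       ((a %% 4)%Z = 0 /\ (b %% 4)%Z = 1 \/ (a %% 4)%Z = 2 /\ (b %% 4)%Z = 3) ->
        ~ monogenic (Gpoly a b))].
Proof.
move=> W1 W2 W3; split.
- move=> [q [/prime_gt1 q_gt1 [W1_dvd | W2_dvd]]].
    exact: not_monogenic_Gpoly_sqr_dvd_W1 q_gt1 W1_dvd.
  exact: not_monogenic_Gpoly_sqr_dvd_W2 q_gt1 W2_dvd.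
- move=> _ _ [q [_ [q_ge3 W3_dvd]]].
  exact: not_monogenic_Gpoly_sqr_dvd_W3 q_ge3 W3_dvd.
- move=> _ _ _ [[a_mod4 b_mod4] | [a_mod4 b_mod4]].
    exact/not_monogenic_Gpoly_sqr4_dvd_W3_sub4/sqr4_dvd_W3_sub4_of_mod4.
  apply: (not_monogenic_Gpoly_sqr_dvd_W3 a b 4) => //.
  exact: sqr4_dvd_W3_of_mod4 a_mod4 b_mod4.
Qed.
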